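(* Let $n\ge4$. There is no total single-sorted alter ego $\underset{\sim}{\mathbf C}_n$ for $\mathbf C_n$ that yields a strong duality on $\mathcal G_n$.
   Context: $\mathbf C_n$ is the Heyting algebra on the chain $\{0<1<\dots<n-1\}$, with min, max, $\bot=0$, $\top=n-1$, $a\to b=\top$ if $a\le b$, $a\to b=b$ if $b<a$. $\mathcal G_n$ is the class of algebras isomorphic to subalgebras of direct powers of $\mathbf C_n$ (the variety generated by $\mathbf C_n$). A (single-sorted) alter ego of $\mathbf C_n$ is a structure $\underset{\sim}{\mathbf C}_n=(C_n;G,H,R,\mathscr T)$ where $\mathscr T$ is the discrete topology, $G$ is a set of finitary total operations, $H$ a set of finitary partial operations and $R$ a set of finitary relations on $C_n$, each algebraic (the graph, resp. the relation, is a subalgebra of a finite power of $\mathbf C_n$); it is total if $H=\emptyset$. With $\mathcal X=\mathbb{IS}_c\mathbb P^+(\underset{\sim}{\mathbf C}_n)$ the class of structures isomorphic to closed substructures of (possibly empty) powers, and hom-functors $D=\mathcal G_n(-,\mathbf C_n)$, $E=\mathcal X(-,\underset{\sim}{\mathbf C}_n)$, the alter ego yields a duality if each evaluation $e_{\mathbf A}\colon\mathbf A\to ED(\mathbf A)$ is an isomorphism, a full duality if moreover each evaluation $\varepsilon_{\mathbf X}\colon\mathbf X\to DE(\mathbf X)$ is an isomorphism, and a strong duality if it yields a full duality and $\underset{\sim}{\mathbf C}_n$ is injective in $\mathcal X$ (with respect to embeddings). *)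

From HB Require Import structures.
From mathcomp Require Import all_boot.
From Stdlib Require Import FunctionalExtensionality PropExtensionality.
From Stdlib Require Lists.List.

Unset Implicit Arguments.

(* The chain C_n = {0 < 1 < ... < n-1}.  Carrier 'I_(n.-1).+1, which   *)
(* has exactly n elements for n >= 1 (the theorem assumes n >= 4).     *)
Definition Cc (n : nat) : Type := 'I_n.-1.+1.

Definition cmeet {n} (a b : Cc n) : Cc n := if (a <= b)%N then a else b.
Definition cjoin {n} (a b : Cc n) : Cc n := if (a <= b)%N then b else a.
Definition cimp  {n} (a b : Cc n) : Cc n := if (a <= b)%N then ord_max else b.
Definition cbot  {n} : Cc n := ord0.
Definition ctop  {n} : Cc n := ord_max.

Record HAlg := {
  hcar : Type;
  hmeet : hcar -> hcar -> hcar;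
  hjoin : hcar -> hcar -> hcar;
  himp : hcar -> hcar -> hcar;
  hbot : hcar;
  htop : hcar }.

Definition Calg (n : nat) : HAlg :=
  {| hcar := Cc n; hmeet := cmeet; hjoin := cjoin; himp := cimp;
     hbot := cbot; htop := ctop |}.

Definition powA (n : nat) (S : Type) : HAlg :=
  {| hcar := S -> Cc n;
     hmeet := fun f g s => cmeet (f s) (g s);
     hjoin := fun f g s => cjoin (f s) (g s);
     himp := fun f g s => cimp (f s) (g s);
     hbot := fun _ => cbot; htop := fun _ => ctop |}.

Definition hom (A B : HAlg) (f : hcar A -> hcar B) : Prop :=
  (forall x y, f (hmeet A x y) = hmeet B (f x) (f y)) /\
  (forall x y, f (hjoin A x y) = hjoin B (f x) (f y)) /\
  (forall x y, f (himp A x y) = himp B (f x) (f y)) /\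
  f (hbot A) = hbot B /\ f (htop A) = htop B.

Definition halg_iso (A B : HAlg) (f : hcar A -> hcar B) : Prop :=
  hom A B f /\ bijective f.

Definition subuniverse (A : HAlg) (P : hcar A -> Prop) : Prop :=
  P (hbot A) /\ P (htop A) /\
  (forall x y, P x -> P y ->
     P (hmeet A x y) /\ P (hjoin A x y) /\ P (himp A x y)).

(* A is in G_n = ISP(C_n): isomorphic to a subalgebra of a direct power,
   i.e. it embeds (injective homomorphism) into some power C_n^S *)
Definition inG (n : nat) (A : HAlg) : Prop :=
  exists (S : Type) (f : hcar A -> hcar (powA n S)),
    injective f /\ hom A (powA n S) f.

(* graph of a k-ary operation, as a subset of C_n^(k+1) (index option 'I_k,
   coordinate None = value) *)
Definition graph {n k} (g : ('I_k -> Cc n) -> Cc n) : (option 'I_k -> Cc n) -> Prop :=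
  fun t => t None = g (fun i => t (Some i)).

(* A total single-sorted alter ego (discrete topology implicit): a set G of
   finitary total operations and a set R of finitary relations, all algebraic. *)
Record AlterEgo (n : nat) := {
  aeG : forall k : nat, (('I_k -> Cc n) -> Cc n) -> Prop;
  aeR : forall k : nat, (('I_k -> Cc n) -> Prop) -> Prop;
  aeG_alg : forall k g, aeG k g -> subuniverse (powA n (option 'I_k)) (graph g);
  aeR_alg : forall k r, aeR k r -> subuniverse (powA n 'I_k) r }.
Arguments aeG {n} a k _.
Arguments aeR {n} a k _.

Record XStr (n : nat) (ae : AlterEgo n) := {
  xcar : Type;
  xopen : (xcar -> Prop) -> Prop;
  xop : forall k g, aeG ae k g -> ('I_k -> xcar) -> xcar;
  xrel : forall k r, aeR ae k r -> ('I_k -> xcar) -> Prop;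
  xopen_union : forall P : (xcar -> Prop) -> Prop,
      (forall V, P V -> xopen V) -> xopen (fun x => exists V, P V /\ V x);
  xopen_inter : forall U V, xopen U -> xopen V -> xopen (fun x => U x /\ V x);
  xopen_full : xopen (fun _ => True) }.
Arguments xcar {n ae} x.
Arguments xopen {n ae} x _.
Arguments xop {n ae} x {k g} _ _.
Arguments xrel {n ae} x {k r} _ _.

Definition CX {n} (ae : AlterEgo n) : XStr n ae.
Proof.
refine {| xcar := Cc n; xopen := fun _ => True;
          xop := fun k g _ t => g t; xrel := fun k r _ t => r t |}; by [].
Defined.

Definition xmorph {n} {ae : AlterEgo n} (X Y : XStr n ae)
    (h : xcar X -> xcar Y) : Prop :=
  (forall V, xopen Y V -> xopen X (fun x => V (h x))) /\
  (forall k g (Hg : aeG ae k g) (t : 'I_k -> xcar X),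
      h (xop X Hg t) = xop Y Hg (fun i => h (t i))) /\
  (forall k r (Hr : aeR ae k r) (t : 'I_k -> xcar X),
      xrel X Hr t -> xrel Y Hr (fun i => h (t i))).

Definition xiso {n} {ae : AlterEgo n} (X Y : XStr n ae)
    (h : xcar X -> xcar Y) : Prop :=
  xmorph X Y h /\
  exists h' : xcar Y -> xcar X, cancel h h' /\ cancel h' h /\ xmorph Y X h'.

(* embeddings: morphisms that are isomorphisms onto a closed substructure *)
Definition xembedding {n} {ae : AlterEgo n} (X Y : XStr n ae)
    (h : xcar X -> xcar Y) : Prop :=
  xmorph X Y h /\ injective h /\
  (forall k r (Hr : aeR ae k r) (t : 'I_k -> xcar X),
      xrel Y Hr (fun i => h (t i)) -> xrel X Hr t) /\
  (forall V, xopen X V -> exists U, xopen Y U /\ forall x, V x <-> U (h x)) /\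
  xopen Y (fun y => ~ exists x, h x = y).

(* product topology on C_n^S (C_n discrete) *)
Definition prod_open {n} (S : Type) (U : (S -> Cc n) -> Prop) : Prop :=
  forall f, U f -> exists F : list S,
    forall h, (forall s, List.In s F -> h s = f s) -> U h.

Definition opclosed {n} (ae : AlterEgo n) (S : Type) (Y : (S -> Cc n) -> Prop) :=
  forall k g (Hg : aeG ae k g) (t : 'I_k -> S -> Cc n),
    (forall i, Y (t i)) -> Y (fun s => g (fun i => t i s)).

Lemma sub_union {n} (S : Type) (Y : (S -> Cc n) -> Prop)
  (P : ({f | Y f} -> Prop) -> Prop) :
  (forall V, P V -> forall y, V y -> exists F : list S, forall y',
      (forall s, List.In s F -> proj1_sig y' s = proj1_sig y s) -> V y') ->
  forall y, (exists V, P V /\ V y) -> exists F : list S, forall y',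
      (forall s, List.In s F -> proj1_sig y' s = proj1_sig y s) ->
      (exists V, P V /\ V y').
Proof.
move=> HP y [V [PV Vy]]; have [F HF] := HP V PV y Vy.
by exists F => y' Hy'; exists V; split => //; apply: HF.
Qed.

Lemma sub_inter {n} (S : Type) (Y : (S -> Cc n) -> Prop) (U V : {f | Y f} -> Prop) :
  (forall y, U y -> exists F : list S, forall y',
      (forall s, List.In s F -> proj1_sig y' s = proj1_sig y s) -> U y') ->
  (forall y, V y -> exists F : list S, forall y',
      (forall s, List.In s F -> proj1_sig y' s = proj1_sig y s) -> V y') ->
  forall y, U y /\ V y -> exists F : list S, forall y',
      (forall s, List.In s F -> proj1_sig y' s = proj1_sig y s) -> U y' /\ V y'.
Proof.
move=> HU HV y [Uy Vy]; have [F1 H1] := HU y Uy; have [F2 H2] := HV y Vy.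
exists (F1 ++ F2)%list => y' Hy'; split.
- by apply: H1 => s Hs; apply: Hy'; apply: List.in_or_app; left.
- by apply: H2 => s Hs; apply: Hy'; apply: List.in_or_app; right.
Qed.

Definition subStr {n} (ae : AlterEgo n) (S : Type) (Y : (S -> Cc n) -> Prop)
  (HY : opclosed ae S Y) : XStr n ae.
Proof.
refine {| xcar := {f : S -> Cc n | Y f};
          xopen := fun V => forall y, V y -> exists F : list S, forall y',
              (forall s, List.In s F -> proj1_sig y' s = proj1_sig y s) -> V y';
          xop := fun k g Hg t =>
            exist _ (fun s => g (fun i => proj1_sig (t i) s))
                  (HY k g Hg (fun i => proj1_sig (t i)) (fun i => proj2_sig (t i)));
          xrel := fun k r Hr t => forall s, r (fun i => proj1_sig (t i) s) |}.
- exact: sub_union.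
- exact: sub_inter.
- by move=> y _; exists nil.
Defined.

(* X = IS_c P^+(C~): structures isomorphic to a closed substructure of a
   (possibly empty) power of C~ *)
Definition InX {n} (ae : AlterEgo n) (X : XStr n ae) : Prop :=
  exists (S : Type) (Y : (S -> Cc n) -> Prop) (HY : opclosed ae S Y),
    prod_open S (fun f => ~ Y f) /\ exists h, xiso X (subStr ae S Y HY) h.

Lemma G_comm {n} (ae : AlterEgo n) k g (Hg : aeG ae k g) :
  (forall u v, g (fun i => cmeet (u i) (v i)) = cmeet (g u) (g v)) /\
  (forall u v, g (fun i => cjoin (u i) (v i)) = cjoin (g u) (g v)) /\
  (forall u v, g (fun i => cimp (u i) (v i)) = cimp (g u) (g v)) /\
  g (fun _ => cbot) = cbot /\ g (fun _ => ctop) = ctop.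
Proof.
have [Hb [Ht Hc]] := aeG_alg n ae k g Hg.
pose tup (u : 'I_k -> Cc n) : option 'I_k -> Cc n :=
  fun o => match o with None => g u | Some i => u i end.
have Gt : forall u, graph g (tup u) by [].
split; [|split; [|split; [|split]]].
- by move=> u v; have [H _] := Hc _ _ (Gt u) (Gt v); rewrite /graph /= in H.
- by move=> u v; have [_ [H _]] := Hc _ _ (Gt u) (Gt v); rewrite /graph /= in H.
- by move=> u v; have [_ [_ H]] := Hc _ _ (Gt u) (Gt v); rewrite /graph /= in H.
- by rewrite /graph /= in Hb.
- by rewrite /graph /= in Ht.
Qed.

Lemma R_clos {n} (ae : AlterEgo n) k r (Hr : aeR ae k r) :
  (forall u v, r u -> r v -> r (fun i => cmeet (u i) (v i))) /\
  (forall u v, r u -> r v -> r (fun i => cjoin (u i) (v i))) /\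
  (forall u v, r u -> r v -> r (fun i => cimp (u i) (v i))) /\
  r (fun _ => cbot) /\ r (fun _ => ctop).
Proof.
have [Hb [Ht Hc]] := aeR_alg n ae k r Hr.
split; [|split; [|split; [|split]]] => //.
- by move=> u v ru rv; have [H _] := Hc u v ru rv.
- by move=> u v ru rv; have [_ [H _]] := Hc u v ru rv.
- by move=> u v ru rv; have [_ [_ H]] := Hc u v ru rv.
Qed.

Definition homset (n : nat) (A : HAlg) : (hcar A -> Cc n) -> Prop :=
  fun x => hom A (Calg n) x.

Lemma homset_opclosed {n} (ae : AlterEgo n) (A : HAlg) :
  opclosed ae (hcar A) (homset n A).
Proof.
move=> k g Hg t Ht.
have [Gm [Gj [Gi [Gb Gt]]]] := G_comm ae k g Hg.
split; [|split; [|split; [|split]]].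
- move=> x y /=.
  have -> : (fun i => t i (hmeet A x y)) = (fun i => cmeet (t i x) (t i y)).
    by apply: functional_extensionality => i; have [H _] := Ht i; exact: H.
  exact: Gm.
- move=> x y /=.
  have -> : (fun i => t i (hjoin A x y)) = (fun i => cjoin (t i x) (t i y)).
    by apply: functional_extensionality => i; have [_ [H _]] := Ht i; exact: H.
  exact: Gj.
- move=> x y /=.
  have -> : (fun i => t i (himp A x y)) = (fun i => cimp (t i x) (t i y)).
    by apply: functional_extensionality => i; have [_ [_ [H _]]] := Ht i; exact: H.
  exact: Gi.
- rewrite /=.
  have -> : (fun i => t i (hbot A)) = (fun _ => cbot).
    by apply: functional_extensionality => i; have [_ [_ [_ [H _]]]] := Ht i; exact: H.
  exact: Gb.
- rewrite /=.
  have -> : (fun i => t i (htop A)) = (fun _ => ctop).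
    by apply: functional_extensionality => i; have [_ [_ [_ [_ H]]]] := Ht i; exact: H.
  exact: Gt.
Qed.

(* D(A): the closed substructure G_n(A, C_n) of C~^A *)
Definition Dfun {n} (ae : AlterEgo n) (A : HAlg) : XStr n ae :=
  subStr ae (hcar A) (homset n A) (homset_opclosed ae A).

Lemma morph_bin {n} (ae : AlterEgo n) (X : XStr n ae) (o : Cc n -> Cc n -> Cc n)
  (Hg : forall k g, aeG ae k g -> forall u v,
      g (fun i => o (u i) (v i)) = o (g u) (g v))
  (Hr : forall k r, aeR ae k r -> forall u v, r u -> r v -> r (fun i => o (u i) (v i)))
  (a b : xcar X -> Cc n) :
  xmorph X (CX ae) a -> xmorph X (CX ae) b ->
  xmorph X (CX ae) (fun x => o (a x) (b x)).
Proof.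
move=> [ca [oa ra]] [cb [ob rb]]; split; [|split].
- move=> V _.
  pose P := fun W : xcar X -> Prop => exists p q, V (o p q) /\
              W = (fun x => a x = p /\ b x = q).
  have HP : forall W, P W -> xopen X W.
    move=> W [p [q [_ ->]]]; apply: xopen_inter.
    + exact: (ca (fun c => c = p)).
    + exact: (cb (fun c => c = q)).
  have E : (fun x => V (o (a x) (b x))) = (fun x => exists W, P W /\ W x).
    apply: functional_extensionality => x; apply: propositional_extensionality; split.
    + move=> Hv; exists (fun y => a y = a x /\ b y = b x); split => //.
      by exists (a x), (b x).
    + by move=> [W [[p [q [Hv ->]]] [-> ->]]].
  rewrite E; exact: xopen_union.
- move=> k g Hk t; rewrite (oa k g Hk t) (ob k g Hk t) /=.
  by rewrite (Hg k g Hk).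
- move=> k r Hk t Ht /=; apply: Hr => //; [exact: (ra k r Hk t Ht)|exact: (rb k r Hk t Ht)].
Qed.

Lemma morph_const {n} (ae : AlterEgo n) (X : XStr n ae) (c : Cc n)
  (Hg : forall k g, aeG ae k g -> g (fun _ => c) = c)
  (Hr : forall k r, aeR ae k r -> r (fun _ => c)) :
  xmorph X (CX ae) (fun _ => c).
Proof.
split; [|split].
- move=> V _.
  pose P := fun W : xcar X -> Prop => V c /\ W = (fun _ => True).
  have E : (fun _ : xcar X => V c) = (fun x => exists W, P W /\ W x).
    apply: functional_extensionality => x; apply: propositional_extensionality; split.
    + by move=> Hv; exists (fun _ => True).
    + by move=> [W [[Hv _] _]].
  rewrite E; apply: xopen_union => W [_ ->]; exact: xopen_full.
- by move=> k g Hk t /=; rewrite (Hg k g Hk).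
- by move=> k r Hk t _ /=; apply: Hr.
Qed.

Definition Eset {n} (ae : AlterEgo n) (X : XStr n ae) := {a : xcar X -> Cc n | xmorph X (CX ae) a}.

Definition Emeet {n} (ae : AlterEgo n) (X : XStr n ae) (a b : Eset ae X) : Eset ae X :=
  exist _ (fun x => cmeet (proj1_sig a x) (proj1_sig b x))
    (morph_bin ae X cmeet (fun k g H => proj1 (G_comm ae k g H))
       (fun k r H => proj1 (R_clos ae k r H)) _ _ (proj2_sig a) (proj2_sig b)).
Definition Ejoin {n} (ae : AlterEgo n) (X : XStr n ae) (a b : Eset ae X) : Eset ae X :=
  exist _ (fun x => cjoin (proj1_sig a x) (proj1_sig b x))
    (morph_bin ae X cjoin (fun k g H => proj1 (proj2 (G_comm ae k g H)))
       (fun k r H => proj1 (proj2 (R_clos ae k r H))) _ _ (proj2_sig a) (proj2_sig b)).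
Definition Eimp {n} (ae : AlterEgo n) (X : XStr n ae) (a b : Eset ae X) : Eset ae X :=
  exist _ (fun x => cimp (proj1_sig a x) (proj1_sig b x))
    (morph_bin ae X cimp (fun k g H => proj1 (proj2 (proj2 (G_comm ae k g H))))
       (fun k r H => proj1 (proj2 (proj2 (R_clos ae k r H)))) _ _ (proj2_sig a) (proj2_sig b)).
Definition Ebot {n} (ae : AlterEgo n) (X : XStr n ae) : Eset ae X :=
  exist _ (fun _ => cbot)
    (morph_const ae X cbot (fun k g H => proj1 (proj2 (proj2 (proj2 (G_comm ae k g H)))))
       (fun k r H => proj1 (proj2 (proj2 (proj2 (R_clos ae k r H)))))).
Definition Etop {n} (ae : AlterEgo n) (X : XStr n ae) : Eset ae X :=
  exist _ (fun _ => ctop)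
    (morph_const ae X ctop (fun k g H => proj2 (proj2 (proj2 (proj2 (G_comm ae k g H)))))
       (fun k r H => proj2 (proj2 (proj2 (proj2 (R_clos ae k r H)))))).

(* E(X): the subalgebra X(X, C~) of C_n^X *)
Definition Efun {n} (ae : AlterEgo n) (X : XStr n ae) : HAlg :=
  {| hcar := Eset ae X; hmeet := Emeet ae X; hjoin := Ejoin ae X;
     himp := Eimp ae X; hbot := Ebot ae X; htop := Etop ae X |}.

Lemma eval_morph {n} (ae : AlterEgo n) (A : HAlg) (a : hcar A) :
  xmorph (Dfun ae A) (CX ae) (fun x => proj1_sig x a).
Proof.
split; [|split].
- move=> V _ y Vy; exists (cons a nil) => y' Hy'.
  by rewrite (Hy' a (or_introl erefl)).
- by [].
- by move=> k r Hr t Ht; exact: (Ht a).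
Qed.

Definition evA {n} (ae : AlterEgo n) (A : HAlg) (a : hcar A) :
  hcar (Efun ae (Dfun ae A)) :=
  exist _ (fun x : xcar (Dfun ae A) => proj1_sig x a) (eval_morph ae A a).

Lemma eps_hom {n} (ae : AlterEgo n) (X : XStr n ae) (x : xcar X) :
  hom (Efun ae X) (Calg n) (fun a => proj1_sig a x).
Proof. by []. Qed.

Definition epsX {n} (ae : AlterEgo n) (X : XStr n ae) (x : xcar X) :
  xcar (Dfun ae (Efun ae X)) :=
  exist _ (fun a : hcar (Efun ae X) => proj1_sig a x) (eps_hom ae X x).

Definition yields_duality {n} (ae : AlterEgo n) : Prop :=
  forall A : HAlg, inG n A -> halg_iso A (Efun ae (Dfun ae A)) (evA ae A).

Definition yields_full_duality {n} (ae : AlterEgo n) : Prop :=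
  yields_duality ae /\
  forall X : XStr n ae, InX ae X -> xiso X (Dfun ae (Efun ae X)) (epsX ae X).

Definition CX_injective {n} (ae : AlterEgo n) : Prop :=
  forall (X Y : XStr n ae), InX ae X -> InX ae Y ->
  forall phi : xcar X -> xcar Y, xembedding X Y phi ->
  forall f : xcar X -> Cc n, xmorph X (CX ae) f ->
  exists g : xcar Y -> Cc n, xmorph Y (CX ae) g /\ forall x, g (phi x) = f x.

Definition yields_strong_duality {n} (ae : AlterEgo n) : Prop :=
  yields_full_duality ae /\ CX_injective ae.

From mathcomp Require Import all_boot zify.
From Stdlib Require Import FunctionalExtensionality ProofIrrelevance IndefiniteDescription Lia.

(* Let e : C_3 -> C_n be the embedding 0 |-> 0, 1 |-> 2, 2 |-> n-1 and let X be
   the set of maps C_3 -> C_n of the form u o e with u an endomorphism of C_n.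
   X is closed under the total operations of any alter ego, hence a (finite,
   discrete) closed substructure of D(C_3) = G_n(C_3, C_n).
   1. If C~_n is injective and yields a duality, every morphism a : X -> C~_n
      extends to D(C_3) and is therefore evaluation at an element of C_3; in
      particular a(e) lies in e(C_3) = {0, 2, n-1}.
   2. Hence a |-> s(a(e)), where s moves 2 down to 1 and fixes every other
      element, is a homomorphism E(X) -> C_n, i.e. a point of DE(X).
   3. A full duality makes it the evaluation at some u o e in X.  Evaluating
      both at the projection of X onto coordinate 1 gives 1 = s(e(1)) = u(2),
      whereas endomorphisms of C_n are extensive, so u(2) >= 2.
   The file first treats substructures of finite powers of the alter ego,
   then the arithmetic of the chains C_n, then the three steps above. *)


Lemma sig_inj {T : Type} {P : T -> Prop} (a b : {x | P x}) :
  proj1_sig a = proj1_sig b -> a = b.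
Proof. by apply: eq_sig_hprop => x; apply: proof_irrelevance. Qed.

Lemma In_enum (S : finType) (s : S) : List.In s (enum S).
Proof.
have : s \in enum S by rewrite mem_enum.
elim: (enum S) => [|x l IH] //=; rewrite in_cons => /orP [/eqP ->|/IH]; by [left|right].
Qed.

(* Substructures of a power C~^S with S finite: the topology is discrete, so
   topological conditions hold trivially. *)
Section FinitePowers.
Variables (n : nat) (ae : AlterEgo n) (S : finType).

Lemma finite_prod_open (U : (S -> Cc n) -> Prop) : prod_open S U.
Proof.
move=> f Uf; exists (enum S) => h Hh.
suff -> : h = f by [].
by apply: functional_extensionality => s; apply: Hh; apply: In_enum.
Qed.

Lemma finite_subStr_open (Y : (S -> Cc n) -> Prop) (HY : opclosed ae S Y)
    (V : xcar (subStr ae S Y HY) -> Prop) : xopen (subStr ae S Y HY) V.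
Proof.
move=> y Vy; exists (enum S) => y' Hy'.
suff -> : y' = y by [].
by apply: sig_inj; apply: functional_extensionality => s; apply: Hy'; apply: In_enum.
Qed.

Lemma xiso_id (X : XStr n ae) : xiso X X id.
Proof.
have Mid : xmorph X X id by split; [|split].
by split => //; exists id.
Qed.

Lemma finite_subStr_InX (Y : (S -> Cc n) -> Prop) (HY : opclosed ae S Y) :
  InX ae (subStr ae S Y HY).
Proof.
exists S, Y, HY; split; first exact: finite_prod_open.
by exists id; apply: xiso_id.
Qed.

Definition sub_incl (Y1 Y2 : (S -> Cc n) -> Prop) (HY1 : opclosed ae S Y1)
    (HY2 : opclosed ae S Y2) (sub12 : forall f, Y1 f -> Y2 f) :
    xcar (subStr ae S Y1 HY1) -> xcar (subStr ae S Y2 HY2) :=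
  fun y => exist Y2 (proj1_sig y) (sub12 _ (proj2_sig y)).

Lemma sub_incl_embedding Y1 Y2 HY1 HY2 sub12 :
  xembedding (subStr ae S Y1 HY1) (subStr ae S Y2 HY2) (sub_incl Y1 Y2 HY1 HY2 sub12).
Proof.
have incl_inj : injective (sub_incl Y1 Y2 HY1 HY2 sub12).
  by move=> y y' /(congr1 (@proj1_sig _ _)) /= /sig_inj.
split; [split; [|split]|split; [|split; [|split]]] => //.
- by move=> V _; apply: finite_subStr_open.
- by move=> k g Hg t; apply: sig_inj.
- move=> V _; exists (fun z => exists y, sub_incl Y1 Y2 HY1 HY2 sub12 y = z /\ V y).
  split; first exact: finite_subStr_open.
  by move=> y; split=> [Vy|[y' [/incl_inj ->]]]; first exists y.
- exact: finite_subStr_open.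
Qed.

End FinitePowers.

Lemma proj_morph {n} (ae : AlterEgo n) (S : Type) (Y : (S -> Cc n) -> Prop)
    (HY : opclosed ae S Y) (s : S) :
  xmorph (subStr ae S Y HY) (CX ae) (fun y => proj1_sig y s).
Proof.
split; [|split] => //.
- by move=> V _ y Vy; exists [:: s] => y' Hy'; rewrite (Hy' s (or_introl erefl)).
- by move=> k r Hr t Ht; apply: (Ht s).
Qed.

Lemma hom_mono {m n} (u : Cc m -> Cc n) : hom (Calg m) (Calg n) u ->
  forall c d : Cc m, (c <= d)%N -> (u c <= u d)%N.
Proof.
move=> [u_meet _] c d le_cd; have := u_meet c d; rewrite /= /cmeet le_cd => ->.
by case: ifP => // /negbT; rewrite -ltnNge => /ltnW.
Qed.

(* Endomorphisms of C_n are extensive: c <= u c.  If u c = u (c-1), then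
   u (c-1) = u (c -> c-1) = u c -> u (c-1) is the top; otherwise u c > u (c-1). *)
Lemma endo_extensive {n} (u : Cc n -> Cc n) : hom (Calg n) (Calg n) u ->
  forall c : Cc n, (c <= u c)%N.
Proof.
move=> u_hom; have [_ [_ [u_imp _]]] := u_hom.
case=> k; elim: k => [//|k IH] ltk.
pose c : Cc n := Ordinal ltk; pose p : Cc n := Ordinal (ltnW ltk).
have imp_cp : cimp c p = p by rewrite /cimp /= ltnn.
have u_cp := u_imp c p; rewrite /= imp_cp /cimp in u_cp.
have le_pc : (u p <= u c)%N by apply: hom_mono => //=.
move: u_cp (IH (ltnW ltk)); rewrite -/p -/c; case: ifP => [le_cp|/negbT lt_pc] u_cp IHp.
- have -> : u c = u p by apply: val_inj; apply/eqP; rewrite eqn_leq le_cp le_pc.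
  by rewrite u_cp /= -ltnS.
- by rewrite -ltnNge in lt_pc; apply: leq_ltn_trans IHp lt_pc.
Qed.

Lemma hom_of_order_embedding {m n} (P : Cc m -> Prop) (f : Cc m -> Cc n)
    (f_le : forall c d, P c -> P d -> (c <= d)%N = (f c <= f d)%N)
    (f_top : f ord_max = ord_max) (c d : Cc m) : P c -> P d ->
  [/\ f (cmeet c d) = cmeet (f c) (f d), f (cjoin c d) = cjoin (f c) (f d)
    & f (cimp c d) = cimp (f c) (f d)].
Proof.
by move=> Pc Pd; rewrite /cmeet /cjoin /cimp -(f_le c d Pc Pd); case: ifP.
Qed.

Section ChainEmbedding.
Variables (n : nat) (hn : (4 <= n)%N).

Definition emb3 (c : Cc 3) : Cc n :=
  if nat_of_ord c == 0 then cbot else if nat_of_ord c == 1 then inord 2 else ctop.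

Lemma val_emb3 (c : Cc 3) :
  nat_of_ord (emb3 c) = if nat_of_ord c == 0 then 0 else if nat_of_ord c == 1 then 2 else n.-1.
Proof. by rewrite /emb3; case: ifP => // _; case: ifP => // _; rewrite inordK //; lia. Qed.

Lemma emb3_le (c d : Cc 3) : (c <= d)%N = (emb3 c <= emb3 d)%N.
Proof.
rewrite !val_emb3.
by case: c => [[|[|[|?]]] ?]; case: d => [[|[|[|?]]] ?] //=; lia.
Qed.

Lemma emb3_inj : injective emb3.
Proof. by move=> c d E; apply: val_inj; apply/eqP; rewrite eqn_leq !emb3_le E leqnn. Qed.

Lemma emb3_hom : hom (Calg 3) (Calg n) emb3.
Proof.
have ops c d := hom_of_order_embedding (fun _ => True) emb3 (fun c d _ _ => emb3_le c d)
                  erefl c d I I.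
by split; [|split; [|split; [|split]]] => // c d /=; case: (ops c d).
Qed.

Lemma inG_C3 : inG n (Calg 3).
Proof.
exists unit, (fun c _ => emb3 c); split.
- by move=> c d E; apply: emb3_inj; apply: (congr1 (fun f => f tt) E).
- have [e_meet [e_join [e_imp [e_bot e_top]]]] := emb3_hom.
  split; [|split; [|split; [|split]]] => [x y|x y|x y||]; apply: functional_extensionality => t.
  + exact: e_meet.
  + exact: e_join.
  + exact: e_imp.
  + exact: e_bot.
  + exact: e_top.
Qed.

Definition collapse (c : Cc n) : Cc n := if nat_of_ord c == 2 then inord 1 else c.

Lemma val_collapse (c : Cc n) :
  nat_of_ord (collapse c) = if nat_of_ord c == 2 then 1 else nat_of_ord c.
Proof. by rewrite /collapse; case: ifP => // _; rewrite inordK //; lia. Qed.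

Lemma val_emb3_1 : nat_of_ord (emb3 (inord 1)) = 2.
Proof. by rewrite val_emb3 inordK. Qed.

Lemma collapse_emb3_1 : collapse (emb3 (inord 1)) = inord 1.
Proof. by rewrite /collapse val_emb3_1. Qed.

Lemma collapse_ops (c d : Cc n) :
  (exists b, c = emb3 b) -> (exists b, d = emb3 b) ->
  [/\ collapse (cmeet c d) = cmeet (collapse c) (collapse d),
      collapse (cjoin c d) = cjoin (collapse c) (collapse d)
    & collapse (cimp c d) = cimp (collapse c) (collapse d)].
Proof.
apply: (hom_of_order_embedding (fun c => exists b, c = emb3 b)).
- move=> _ _ [b ->] [b' ->]; rewrite !val_collapse !val_emb3.
  by case: b => [[|[|[|?]]] ?]; case: b' => [[|[|[|?]]] ?] //=; case: eqP => //=; lia.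
- by apply: val_inj; rewrite /collapse /=; case: eqP => /=; lia.
Qed.

End ChainEmbedding.

Lemma hom_comp (A B C : HAlg) (f : hcar A -> hcar B) (g : hcar B -> hcar C) :
  hom A B f -> hom B C g -> hom A C (fun x => g (f x)).
Proof.
move=> [f1 [f2 [f3 [f4 f5]]]] [g1 [g2 [g3 [g4 g5]]]].
by split; [|split; [|split; [|split]]] => *; rewrite ?f1 ?f2 ?f3 ?f4 ?f5 ?g1 ?g2 ?g3 ?g4 ?g5.
Qed.

Section Factorisation.
Variables (n : nat) (ae : AlterEgo n) (A B : HAlg) (e : hcar A -> hcar B).

Definition factors_through (f : hcar A -> Cc n) : Prop :=
  exists u, homset n B u /\ forall a, f a = u (e a).

Lemma factors_through_opclosed : opclosed ae (hcar A) factors_through.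
Proof.
move=> k g Hg t t_fac.
have [U U_fac] : exists U : 'I_k -> hcar B -> Cc n,
    forall i, homset n B (U i) /\ forall a, t i a = U i (e a).
  exists (fun i => proj1_sig (constructive_indefinite_description _ (t_fac i))).
  by move=> i; apply: (proj2_sig (constructive_indefinite_description _ (t_fac i))).
exists (fun b => g (fun i => U i b)); split.
- by apply: (homset_opclosed ae B k g Hg U) => i; case: (U_fac i).
- by move=> a; congr g; apply: functional_extensionality => i; case: (U_fac i).
Qed.

Lemma factors_through_hom (f : hcar A -> Cc n) :
  hom A B e -> factors_through f -> homset n A f.
Proof.
move=> e_hom [u [u_hom f_eq]].
have -> : f = (fun a => u (e a)) by apply: functional_extensionality.
exact: hom_comp e_hom u_hom.
Qed.

End Factorisation.

Lemma morphisms_are_evaluations {n} (ae : AlterEgo n) (A : HAlg) (X : XStr n ae)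
    (phi : xcar X -> xcar (Dfun ae A)) :
  yields_duality ae -> CX_injective ae -> inG n A -> InX ae X -> InX ae (Dfun ae A) ->
  xembedding X (Dfun ae A) phi ->
  forall a, xmorph X (CX ae) a -> exists c : hcar A, forall x, a x = proj1_sig (phi x) c.
Proof.
move=> dual inj A_G X_X DA_X phi_emb a a_morph.
have [g [g_morph g_ext]] := inj X (Dfun ae A) X_X DA_X phi phi_emb a a_morph.
have [_ [ev_inv _ ev_invK]] := dual A A_G.
exists (ev_inv (exist _ g g_morph)) => x; rewrite -g_ext.
exact: esym (congr1 (fun z => proj1_sig z (phi x)) (ev_invK (exist _ g g_morph))).
Qed.

Lemma collapse_at_hom {n} (hn : (4 <= n)%N) (ae : AlterEgo n) (X : XStr n ae) (x : xcar X) :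
  (forall a : Eset ae X, exists b, proj1_sig a x = emb3 n b) ->
  homset n (Efun ae X) (fun a => collapse n (proj1_sig a x)).
Proof.
move=> vals; split; [|split; [|split; [|split]]] => [a b|a b|a b||].
- by case: (collapse_ops n hn _ _ (vals a) (vals b)).
- by case: (collapse_ops n hn _ _ (vals a) (vals b)).
- by case: (collapse_ops n hn _ _ (vals a) (vals b)).
- by [].
- by apply: val_inj; rewrite /collapse /=; case: eqP => /=; lia.
Qed.

Section Obstruction.
Variables (n : nat) (hn : (4 <= n)%N) (ae : AlterEgo n).

Definition factor_emb3 : (Cc 3 -> Cc n) -> Prop := factors_through n (Calg 3) (Calg n) (emb3 n).

Definition X_emb3 : XStr n ae :=
  subStr ae (Cc 3) factor_emb3 (factors_through_opclosed n ae (Calg 3) (Calg n) (emb3 n)).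

Definition X_emb3_to_D : xcar X_emb3 -> xcar (Dfun ae (Calg 3)) :=
  sub_incl n ae 'I_3 _ _ _ _
    (fun f => factors_through_hom n (Calg 3) (Calg n) (emb3 n) f (emb3_hom n hn)).

Lemma emb3_factors : factor_emb3 (emb3 n).
Proof. by exists id; split; [split; [|split; [|split; [|split]]]|]. Qed.

Definition emb3_pt : xcar X_emb3 := exist factor_emb3 (emb3 n) emb3_factors.

Lemma X_emb3_values : yields_duality ae -> CX_injective ae ->
  forall a : Eset ae X_emb3, exists b, proj1_sig a emb3_pt = emb3 n b.
Proof.
move=> dual inj [a a_morph].
have [c a_ev] := morphisms_are_evaluations ae (Calg 3) X_emb3 X_emb3_to_D dual inj
  (inG_C3 n hn) (finite_subStr_InX n ae _ _ _) (finite_subStr_InX n ae _ _ _)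
  (sub_incl_embedding n ae _ _ _ _ _ _) a a_morph.
by exists c; rewrite /= a_ev.
Qed.

Lemma factor_emb3_ge2 (f : Cc 3 -> Cc n) : factor_emb3 f -> (2 <= f (inord 1))%N.
Proof.
move=> [u [u_hom ->]]; have := endo_extensive u u_hom (emb3 n (inord 1)).
by rewrite val_emb3_1.
Qed.

End Obstruction.

(* Full duality makes a |-> s(a e) the evaluation at some u o e; at the
   projection onto coordinate 1 this reads u 2 = s(e 1) = 1, a contradiction. *)
Theorem corollary6p2 (n : nat) (hn : (4 <= n)%N) (ae : AlterEgo n) :
  ~ yields_strong_duality ae.
Proof.
move=> [[dual full] inj].
pose X := X_emb3 n ae.
pose Psi : xcar (Dfun ae (Efun ae X)) :=
  exist _ _ (collapse_at_hom hn ae X (emb3_pt n ae) (X_emb3_values n hn ae dual inj)).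
have [_ [eps_inv [_ [eps_invK _]]]] := full X (finite_subStr_InX n ae _ _ _).
pose proj_1 : Eset ae X := exist _ _ (proj_morph ae (Cc 3) _ _ (inord 1)).
have := congr1 (fun z => proj1_sig z proj_1) (eps_invK Psi).
case: (eps_inv Psi) => f f_fac /=; rewrite (collapse_emb3_1 n hn) => f1.
have := factor_emb3_ge2 n hn f f_fac; rewrite f1 inordK //; lia.
Qed.
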